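(* In any execution of Algorithm A, if a process $p_i$ writes a quadruplet $Y$ into some register of $\mathit{REG}$, and $\mathit{view}$ is the array returned by the last snapshot $p_i$ took before this write, then $Y\sqsupseteq X$ for every entry $X$ of $\mathit{view}$.
   Context: Quadruplets, lexicographic order: a quadruplet is $\langle rd,\mathit{lvl},\mathit{cfl},\mathit{val}\rangle$ with $rd\in\mathbb{N}$, $\mathit{lvl}\in\{\mathtt{down}<\mathtt{up}\}$, $\mathit{cfl}\in\{\mathtt{false}<\mathtt{true}\}$, $\mathit{val}$ in a totally ordered value set with a least default $\bot$; quadruplets are totally ordered lexicographically. $X \sqsupset Y$ iff $(X>Y)\wedge[(X.rd>Y.rd)\vee X.\mathit{cfl} \vee (\neg Y.\mathit{cfl}\wedge X.\mathit{val}=Y.\mathit{val})]$; $X\sqsupseteq Y$ iff $X\sqsupset Y$ or $X=Y$. For a nonempty finite set $T$ of quadruplets with lexicographic maximum $\langle r,\ell,c,v\rangle$, $\mathrm{sup}(T)=\langle r,\ell,\mathit{conflict}(T),v\rangle$ where $\mathit{conflict}(T)$ holds iff some element of $T$ of round $r$ has conflict field $\mathtt{true}$, or the elements of $T$ of round $r$ carry at least two distinct values. Model and Algorithm A: $n$ anonymous asynchronous processes (any number may crash) share an atomic snapshot object $\mathit{REG}[1..m]$ (here $m=n$) of multi-writer registers, each initially $\langle 0,\mathtt{down},\mathtt{false},\bot\rangle$, with atomic operations $\mathrm{snapshot}()$ (returns the whole array) and $\mathrm{write}(x,X)$. A process proposing $v$ repeats forever: $\mathit{view}\leftarrow\mathrm{snapshot}()$;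 then (1) if all entries equal $\langle r,\mathtt{up},\mathtt{false},w\rangle$ with $r>0$, it returns (decides) $w$; (2) else if all entries equal $\langle r,\mathtt{down},\mathtt{false},w\rangle$ with $r>0$, it writes $\langle r+1,\mathtt{up},\mathtt{false},w\rangle$ into $\mathit{REG}[1]$; (3) else if all entries equal $\langle r,\ell,\mathtt{true},w\rangle$ with $r>0$, it writes $\langle r+1,\mathtt{down},\mathtt{false},w\rangle$ into $\mathit{REG}[1]$; (4) otherwise it computes $S=\mathrm{sup}(\{\mathit{view}[1],\dots,\mathit{view}[m],\langle 1,\mathtt{down},\mathtt{false},v\rangle\})$, lets $x$ be the smallest index with $\mathit{view}[x]\neq S$, and writes $S$ into $\mathit{REG}[x]$. *)

From HB Require Import structures.
From mathcomp Require Import all_boot all_order.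
Set Implicit Arguments.
Unset Strict Implicit.
Unset Printing Implicit Defensive.
Import Order.TTheory.

Section AlgorithmA.
Context {d : Order.disp_t} {V : bOrderType d}.

(* A quadruplet <rd, lvl, cfl, val>; lvl: false = down, true = up. *)
Definition quad := (nat * bool * bool * V)%type.
Definition mkQ (r : nat) (l c : bool) (v : V) : quad := (r, l, c, v).
Definition rd (X : quad) : nat := X.1.1.1.
Definition lvl (X : quad) : bool := X.1.1.2.
Definition cfl (X : quad) : bool := X.1.2.
Definition qval (X : quad) : V := X.2.
Definition qinit : quad := mkQ 0 false false \bot%O.

Definition qlt (X Y : quad) : bool :=
  (rd X < rd Y) || ((rd X == rd Y) &&
  ((~~ lvl X && lvl Y) || ((lvl X == lvl Y) &&
  ((~~ cfl X && cfl Y) || ((cfl X == cfl Y) && (qval X < qval Y)%O))))).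

Definition qsq (X Y : quad) : bool :=
  qlt Y X && [|| rd Y < rd X, cfl X | ~~ cfl Y && (qval X == qval Y)].
Definition qsqe (X Y : quad) : bool := qsq X Y || (X == Y).

Definition qmax2 (X Y : quad) : quad := if qlt X Y then Y else X.
Definition qmaxs (X : quad) (T : seq quad) : quad := foldl qmax2 X T.

Definition conflict (T : seq quad) (r : nat) : bool :=
  has (fun X => (rd X == r) && cfl X) T ||
  has (fun X => has (fun Y => [&& rd X == r, rd Y == r & qval X != qval Y]) T) T.

Definition qsup (X : quad) (T : seq quad) : quad :=
  let M := qmaxs X T in mkQ (rd M) (lvl M) (conflict (X :: T) (rd M)) (qval M).

Inductive action := ADecide of V | AWrite of nat & quad.

Definition uniform (view : seq quad) : option quad :=
  match view with
  | h :: _ => if all (pred1 h) view then Some h else None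
  | [::] => None
  end.

(* indices are 0-based: paper's REG[1] is index 0 *)
Definition default_action (v : V) (view : seq quad) : action :=
  let S := qsup (mkQ 1 false false v) view in
  AWrite (find (fun X => X != S) view) S.

Definition step_action (v : V) (view : seq quad) : action :=
  match uniform view with
  | Some h =>
      if [&& 0 < rd h, lvl h & ~~ cfl h] then ADecide (qval h)
      else if [&& 0 < rd h, ~~ lvl h & ~~ cfl h] then
        AWrite 0 (mkQ (rd h).+1 true false (qval h))
      else if (0 < rd h) && cfl h then
        AWrite 0 (mkQ (rd h).+1 false false (qval h))
      else default_action v view
  | None => default_action v view
  end.

(* local state of a process: about to snapshot / holding its last view / decided *)
Inductive lstate := LReady | LSnap of seq quad | LDone of V.

Record config := Config { regs : seq quad; locs : nat -> lstate }.

Definition init_config (n : nat) : config :=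
  Config (nseq n qinit) (fun _ => LReady).

Definition upd (f : nat -> lstate) (p : nat) (s : lstate) : nat -> lstate :=
  fun q => if q == p then s else f q.

Inductive event :=
  | ESnap of nat
  | EWrite of nat & nat & quad   (* process, register index, written value *)
  | EDecide of nat & V.

(* atomic steps of an asynchronous execution; processes proposing prop p,
   p < n; crashes = processes that simply stop taking steps *)
Inductive step (n : nat) (prop : nat -> V) : config -> event -> config -> Prop :=
  | st_snap c p : p < n -> locs c p = LReady ->
      step n prop c (ESnap p) (Config (regs c) (upd (locs c) p (LSnap (regs c))))
  | st_write c p view x Y : p < n -> locs c p = LSnap view ->
      step_action (prop p) view = AWrite x Y ->
      step n prop c (EWrite p x Y)
        (Config (set_nth qinit (regs c) x Y) (upd (locs c) p LReady))
  | st_decide c p view w : p < n -> locs c p = LSnap view ->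
      step_action (prop p) view = ADecide w ->
      step n prop c (EDecide p w) (Config (regs c) (upd (locs c) p (LDone w))).

Inductive reachable (n : nat) (prop : nat -> V) : config -> Prop :=
  | reach_init : reachable n prop (init_config n)
  | reach_step c e c' : reachable n prop c -> step n prop c e c' ->
      reachable n prop c'.

End AlgorithmA.

(* The written value Y is either the sup S of the view together with the
   proposal, or, after a uniform view, a quadruplet of a strictly larger
   round.  In the first, S is lexicographically
   at least every entry X; if S.rd > X.rd we are done, and otherwise X lies in
   the top round, so either S carries the conflict flag, or the absence of a
   conflict forces X and the maximum to agree on the value and to carry no
   flag, which is exactly the remaining disjunct of [qsq]. *)
From mathcomp Require Import all_boot all_order zify.
Import Order.TTheory.

Section Quadruplets.
Context {d : Order.disp_t} {V : bOrderType d}.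
Implicit Types (X Y Z M : @quad d V) (T : seq (@quad d V)).

Definition qle X Y : bool := ~~ qlt Y X.

Lemma qle_refl X : qle X X.
Proof.
case: X => [[[r l] c] v]; rewrite /qle /qlt /rd /lvl /cfl /qval /= ltnn !eqxx /=.
by case: l c => [] []; rewrite //= ltxx.
Qed.

Lemma qlt_le X Y : qlt X Y -> qle X Y.
Proof.
case: X => [[[r1 l1] c1] v1]; case: Y => [[[r2 l2] c2] v2].
rewrite /qle /qlt /rd /lvl /cfl /qval /=.
case: (ltngtP r2 r1) => //= _.
by case: l1 l2 c1 c2 => [] [] [] [] //=; rewrite -?leNgt; apply: ltW.
Qed.

Lemma qle_trans {Y X Z} : qle X Y -> qle Y Z -> qle X Z.
Proof.
case: X => [[[r1 l1] c1] v1]; case: Y => [[[r2 l2] c2] v2].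
case: Z => [[[r3 l3] c3] v3]; rewrite /qle /qlt /rd /lvl /cfl /qval /=.
case: (ltngtP r2 r1) => ?; case: (ltngtP r3 r2) => ?;
  case: (ltngtP r3 r1) => ? //=; try lia.
by case: l1 l2 l3 c1 c2 c3 => [] [] [] [] [] [] //=; rewrite -?leNgt; apply: le_trans.
Qed.

Lemma qmax2_ge X Y : qle X (qmax2 X Y) && qle Y (qmax2 X Y).
Proof.
by rewrite /qmax2; case: ifP => [/qlt_le -> | /negbT YleX]; rewrite qle_refl ?YleX.
Qed.

Lemma qmaxs_mem X T : qmaxs X T \in X :: T.
Proof.
elim: T X => [|Y T IH] X /=; first exact: mem_head.
have := IH (qmax2 X Y); rewrite /qmaxs /= !inE => /orP [/eqP -> | ->].
  by rewrite /qmax2; case: ifP; rewrite eqxx ?orbT.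
by rewrite !orbT.
Qed.

Lemma qmaxs_ge X T Z : Z \in X :: T -> qle Z (qmaxs X T).
Proof.
elim: T X Z => [|Y T IH] X Z; first by rewrite inE => /eqP ->; apply: qle_refl.
have /andP [XleM YleM] := qmax2_ge X Y.
rewrite !inE => /or3P [/eqP -> | /eqP -> | ZinT].
- exact: qle_trans XleM (IH _ _ (mem_head _ _)).
- exact: qle_trans YleM (IH _ _ (mem_head _ _)).
- by apply: IH; rewrite inE ZinT orbT.
Qed.

Lemma conflictF_cfl T r X : ~~ conflict T r -> X \in T -> rd X = r -> ~~ cfl X.
Proof.
case/norP=> noflag _ XinT rX; apply: contra noflag => cX.
by apply/hasP; exists X; rewrite ?rX ?eqxx.
Qed.

Lemma conflictF_val T r X Z :
  ~~ conflict T r -> X \in T -> Z \in T -> rd X = r -> rd Z = r -> qval X = qval Z.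
Proof.
case/norP=> _ novals XinT ZinT rX rZ; apply/eqP; apply: contraNT novals => neq.
by apply/hasP; exists X => //; apply/hasP; exists Z; rewrite ?rX ?rZ ?eqxx.
Qed.

Lemma qsqe_of_max M X (cf : bool) :
  qle X M ->
  (~~ cf -> rd X = rd M -> [/\ ~~ cfl X, qval X = qval M & ~~ cfl M]) ->
  qsqe (mkQ (rd M) (lvl M) cf (qval M)) X.
Proof.
case: M => [[[rm lm] cm] vm]; case: X => [[[rX lX] cX] vX].
rewrite /qle /qsqe /qsq /qlt /mkQ /rd /lvl /cfl /qval /= !xpair_eqE.
case: (ltngtP rX rm) => //= <- XleM agree; move: XleM.
case: cf agree => [_ | /(_ isT erefl) [/negbTE -> <- /negbTE ->]].
  rewrite ?orbT ?andbT; case: lm lX cm cX => [] [] [] [] //=;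
    rewrite ?orbT //= -?leNgt ?le_eqVlt; case/orP => [/eqP -> | ->];
    by rewrite ?eqxx ?orbT.
by case: lm lX => [] [] //=; rewrite !eqxx ?ltxx ?orbT.
Qed.

Lemma qsup_sqe X0 T X : X \in T -> qsqe (qsup X0 T) X.
Proof.
move=> XinT; have XinT0 : X \in X0 :: T by rewrite inE XinT orbT.
apply: qsqe_of_max; first exact: qmaxs_ge.
move=> noconf rX; have MinT0 := qmaxs_mem X0 T.
split; [exact: conflictF_cfl noconf XinT0 rX | exact: conflictF_val noconf _ _ rX _
       | exact: conflictF_cfl noconf MinT0 _].
Qed.

Lemma rd_lt_sqe X Y : rd X < rd Y -> qsqe Y X.
Proof. by move=> lt_rd; rewrite /qsqe /qsq /qlt lt_rd. Qed.

Lemma uniform_eq T h : uniform T = Some h -> forall X, X \in T -> X = h.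
Proof.
case: T => [|a T] //; rewrite /uniform; case: ifP => // /allP all_a [<-] X XinT.
by apply/eqP; apply: all_a.
Qed.

Lemma step_action_write_sqe v T x Y :
  step_action v T = AWrite x Y -> forall X, X \in T -> qsqe Y X.
Proof.
rewrite /step_action /default_action.
case unif: (uniform T) => [h|]; last by case=> _ <-; apply: qsup_sqe.
have next_round l c X : X \in T -> qsqe (mkQ (rd h).+1 l c (qval h)) X.
  by move=> /(uniform_eq _ _ unif) ->; apply: rd_lt_sqe.
case: ifP => // _; case: ifP => _; first by case=> _ <-; apply: next_round.
case: ifP => _; first by case=> _ <-; apply: next_round.
by case=> _ <-; apply: qsup_sqe.
Qed.

End Quadruplets.

Lemma step_write_inv d (V : bOrderType d) n (prop : nat -> V) c c' p x Y :
  step n prop c (EWrite p x Y) c' ->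
  exists2 view, locs c p = LSnap view & step_action (prop p) view = AWrite x Y.
Proof. by move=> st; inversion st; eexists; eassumption. Qed.

Theorem lemma4 (d : Order.disp_t) (V : bOrderType d) (n : nat) (prop : nat -> V)
    (c c' : @config d V) (p x : nat) (Y : quad) (view : seq quad) :
  0 < n ->
  reachable n prop c ->
  step n prop c (EWrite p x Y) c' ->
  locs c p = LSnap view ->
  forall X, X \in view -> qsqe Y X.
Proof.
move=> _ _ /step_write_inv [view' snap_p act] snap_p'.
move: snap_p; rewrite snap_p' => -[->].
exact: step_action_write_sqe act.
Qed.
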